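(* Let $C_0$ be any quantum circuit with gates $G_1,\dots,G_m$, let $H_1,\dots,H_m$ be unitaries (each of the same dimension as the corresponding $G_i$) drawn independently from the Haar measure, and let $C(\theta)$, $\theta\in[0,1]$, be the circuit obtained from $C_0$ by replacing each gate $G_i$ with $H_i(\theta)G_i$, where $H_i(\theta)$ is the Cayley transform of $H_i$. Let $\mathcal N$ be any fixed noise model. Then $p_0(C(\theta),\mathcal N)$ is a rational function in $\theta$ whose numerator and denominator have degree $O(m)$.
   Context: Cayley transform: for a unitary $H=\sum_j e^{i\varphi_j}|\psi_j\rangle\langle\psi_j|$ with $\varphi_j\in[-\pi,\pi]$, $H(\theta)=(\theta I+(2-\theta)H)((2-\theta)I+\theta H)^{-1}=\sum_j\frac{1+i(1-\theta)\tan(\varphi_j/2)}{1-i(1-\theta)\tan(\varphi_j/2)}|\psi_j\rangle\langle\psi_j|$, so $H(0)=H$ and $H(1)=I$. A noise model $\mathcal N$ consists of $O(m)$ noise channels placed in the circuit, each acting on a constant number of qubits, of the form $(1-\gamma)\mathcal I+\gamma\mathcal E_k$ with $\mathcal E_k$ an arbitrary CPTP map, fixed independently of the gates. For an $n$-qubit circuit $C$, $p_0(C,\mathcal N)=\mathrm{Tr}[|0^n\rangle\langle 0^n|\,\mathcal C_{\mathcal N}(|0^n\rangle\langle 0^n|)]$, where $\mathcal C_{\mathcal N}$ is the channel obtained by applying the noise model to $C$. *)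

From HB Require Import structures.
From mathcomp Require Import all_boot all_order all_algebra.
From mathcomp Require Import complex.
Set Implicit Arguments. Unset Strict Implicit. Unset Printing Implicit Defensive.
Import Order.TTheory GRing.Theory Num.Theory.
Local Open Scope ring_scope.
Local Open Scope complex_scope.

Section QC.
Variable R : rcfType.
Local Notation C := R[i].

Definition adjmx d (A : 'M[C]_d) : 'M[C]_d := (map_mx (@conjc R) A)^T.

Definition unitary d (A : 'M[C]_d) : Prop := A *m adjmx A = 1%:M.

(* bit j of a basis index x : qubit j is the j-th binary digit *)
Definition bitof (x j : nat) : bool := odd (x %/ 2 ^ j).

(* entry of a d x d matrix at nat positions (0 out of range) *)
Definition mxe d (A : 'M[C]_d) (a b : nat) : C :=
  match @insub _ (fun x => x < d)%N (ordinal d) a,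
        @insub _ (fun x => x < d)%N (ordinal d) b with
  | Some i, Some j => A i j
  | _, _ => 0
  end.

(* index in the k-qubit space of the restriction of basis state x to qubits q *)
Definition restr_idx k n (q : 'I_k -> 'I_n) (x : nat) : nat :=
  (\sum_(l < k) bitof x (q l) * 2 ^ l)%N.

(* the operator U (acting on the k qubits q_0..q_{k-1}) tensored with the identity
   on the remaining qubits, as a 2^n x 2^n matrix *)
Definition embed k n (q : 'I_k -> 'I_n) (U : 'M[C]_(2 ^ k)) : 'M[C]_(2 ^ n) :=
  \matrix_(i, j)
    (if [forall l : 'I_n, [exists t : 'I_k, q t == l] || (bitof i l == bitof j l)]
     then mxe U (restr_idx q i) (restr_idx q j) else 0).

Definition cayley d (H : 'M[C]_d) (theta : R) : 'M[C]_d :=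
  (theta%:C *: 1%:M + (2 - theta)%:C *: H) *m invmx ((2 - theta)%:C *: 1%:M + theta%:C *: H).

(* a local noise channel: qubits it acts on and the Kraus operators of E_k *)
Record noise_chan n := NoiseChan {
  nk : nat;
  nq : 'I_nk -> 'I_n;
  nkraus : seq 'M[C]_(2 ^ nk) }.

(* E_k is CPTP (Kraus form, sum K^dag K = I), acts on <= K qubits, injective wiring *)
Definition valid_noise n (Kmax : nat) (ch : noise_chan n) : Prop :=
  [/\ (nk ch <= Kmax)%N, injective (@nq n ch) &
      \sum_(Kr <- nkraus ch) adjmx Kr *m Kr = 1%:M].

Definition apply_noise n (gamma : R) (ch : noise_chan n) (rho : 'M[C]_(2 ^ n)) :
    'M[C]_(2 ^ n) :=
  (1 - gamma)%:C *: rho +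
  gamma%:C *: \sum_(Kr <- nkraus ch)
                 (embed (@nq n ch) Kr *m rho *m adjmx (embed (@nq n ch) Kr)).

Definition apply_noises n (gamma : R) (s : seq (noise_chan n)) (rho : 'M[C]_(2 ^ n)) :=
  foldl (fun r ch => apply_noise gamma ch r) rho s.

Definition apply_unitary N (U : 'M[C]_N) (rho : 'M[C]_N) := U *m rho *m adjmx U.

Definition proj0 n : 'M[C]_(2 ^ n) :=
  \matrix_(i, j) (((i : nat) == 0%N) && ((j : nat) == 0%N))%:R.

(* noisy circuit: Nz ord0 applied first, then for i = 0..m-1 the gate
   (H_i(theta) G_i on qubits q i) followed by the noise channels Nz (i+1). *)
Definition noisy_circuit n m (k : 'I_m -> nat) (q : forall i, 'I_(k i) -> 'I_n)
    (G H : forall i, 'M[C]_(2 ^ k i)) (gamma : R)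
    (Nz : 'I_m.+1 -> seq (noise_chan n)) (theta : R) (rho : 'M[C]_(2 ^ n)) :
    'M[C]_(2 ^ n) :=
  foldl (fun r i => apply_noises gamma (Nz (lift ord0 i))
                      (apply_unitary (embed (q i) (cayley (H i) theta *m G i)) r))
        (apply_noises gamma (Nz ord0) rho) (enum 'I_m).

Definition p0 n m (k : 'I_m -> nat) (q : forall i, 'I_(k i) -> 'I_n)
    (G H : forall i, 'M[C]_(2 ^ k i)) (gamma : R)
    (Nz : 'I_m.+1 -> seq (noise_chan n)) (theta : R) : C :=
  \tr (proj0 n *m noisy_circuit q G H gamma Nz theta (proj0 n)).

End QC.

From HB Require Import structures.
From mathcomp Require Import all_boot all_order all_algebra.
From mathcomp Require Import complex.
From mathcomp Require Import perm.
From mathcomp Require Import zify ring.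
From Stdlib Require List.
Import Order.TTheory GRing.Theory Num.Theory.
Local Open Scope ring_scope.
Local Open Scope complex_scope.
Set Implicit Arguments. Unset Strict Implicit. Unset Printing Implicit Defensive.

(* By Cramer's rule, the Cayley factor
   H(t) = (t I + (2 - t) H) ((2 - t) I + t H)^-1 of a d x d matrix H is a matrix of
   polynomials in t of degree at most d + 1 divided by the single polynomial
   q(t) = det ((2 - t) I + t H), of degree at most d and nonzero on [0, 1].
   Conjugating the state by a gate, rho |-> U rho U^dagger, thus multiplies a
   common denominator of the entries of rho by q * conj q and raises all degrees by
   2 (d + 1); embedding a gate into the n-qubit space and applying a noise channel
   are t-independent linear maps, which change neither.  After m gates the entry
   <0^n| rho |0^n> = p_0 is a ratio of polynomials of degree O(m).  As rho stays
   Hermitian, p_0 is real, and multiplying numerator and denominator by the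
   conjugate of the denominator makes both of them real polynomials. *)

Section RationalFunctions.
Variables (R : rcfType) (T : {pred R}).
Local Notation C := R[i].

Definition ratfn (Q : {poly C}) (n : nat) (f : R -> C) :=
  exists2 P : {poly C}, (size P <= n.+1)%N &
    {in T, forall t, f t = P.[t%:C] / Q.[t%:C]}.

Lemma eq_ratfn Q n (f g : R -> C) : {in T, f =1 g} -> ratfn Q n f -> ratfn Q n g.
Proof. by move=> efg [P sP eP]; exists P => // t tT; rewrite -efg // eP. Qed.

Lemma ratfn_widen Q n n' f : (n <= n')%N -> ratfn Q n f -> ratfn Q n' f.
Proof. by move=> le_nn' [P sP eP]; exists P => //; apply: leq_trans sP _. Qed.

Lemma ratfn0 Q n : ratfn Q n (fun=> 0).
Proof. by exists 0 => [|t _]; rewrite ?size_poly0 // horner0 mul0r. Qed.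

Lemma ratfn_cst (c : C) : ratfn 1 0 (fun=> c).
Proof. by exists c%:P => [|t _]; rewrite ?size_polyC_leq1 // hornerC hornerE divr1. Qed.

Lemma ratfn_affine (a b : C) : ratfn 1 1 (fun t => a + b * t%:C).
Proof.
exists (a%:P + b *: 'X) => [|t _]; last by rewrite !hornerE divr1.
rewrite (leq_trans (size_polyD _ _)) // geq_max (leq_trans (size_polyC_leq1 _)) //.
by rewrite (leq_trans (size_scale_leq _ _)) ?size_polyX.
Qed.

Lemma ratfnD Q n (f g : R -> C) :
  ratfn Q n f -> ratfn Q n g -> ratfn Q n (fun t => f t + g t).
Proof.
move=> [P sP eP] [P' sP' eP']; exists (P + P') => [|t tT].
  by rewrite (leq_trans (size_polyD _ _)) // geq_max sP sP'.
by rewrite eP // eP' // hornerD mulrDl.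
Qed.

Lemma ratfn_sum Q n (I : Type) (r : seq I) (F : I -> R -> C) :
  (forall i, ratfn Q n (F i)) -> ratfn Q n (fun t => \sum_(i <- r) F i t).
Proof.
move=> ratF; elim: r => [|i r IHr].
  by apply: eq_ratfn (ratfn0 Q n) => t _; rewrite big_nil.
by apply: eq_ratfn (ratfnD (ratF i) IHr) => t _; rewrite big_cons.
Qed.

Lemma ratfnM Q1 Q2 n1 n2 (f g : R -> C) : ratfn Q1 n1 f -> ratfn Q2 n2 g ->
  ratfn (Q1 * Q2) (n1 + n2) (fun t => f t * g t).
Proof.
move=> [P sP eP] [P' sP' eP']; exists (P * P') => [|t tT].
  by apply: leq_trans (size_polyMleq _ _) _; lia.
by rewrite eP // eP' // !hornerM invfM mulrACA.
Qed.

Lemma ratfnZ Q n (c : C) f : ratfn Q n f -> ratfn Q n (fun t => c * f t).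
Proof.
move=> [P sP eP]; exists (c *: P) => [|t tT].
  exact: leq_trans (size_scale_leq _ _) sP.
by rewrite eP // hornerZ mulrA.
Qed.

Lemma ratfn_prod N n (F : 'I_N -> R -> C) : (forall i, ratfn 1 n (F i)) ->
  ratfn 1 (N * n) (fun t => \prod_(i < N) F i t).
Proof.
elim: N F => [|N IHN] F ratF.
  by apply: eq_ratfn (ratfn_widen _ (ratfn_cst 1)) => // t _; rewrite big_ord0.
have := ratfnM (IHN (fun i => F (widen_ord (leqnSn N) i)) (fun i => ratF _)) (ratF ord_max).
rewrite mulr1 -mulSnr; apply: eq_ratfn => t _.
by rewrite big_ord_recr.
Qed.

Lemma horner_conjc (P : {poly C}) (t : R) :
  (map_poly conjc P).[t%:C] = conjc P.[t%:C].
Proof. by rewrite -{1}conjc_real horner_map. Qed.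

Lemma ratfnJ Q n f : ratfn Q n f -> ratfn (map_poly conjc Q) n (fun t => conjc (f t)).
Proof.
move=> [P sP eP]; exists (map_poly conjc P) => [|t tT].
  by rewrite size_map_poly.
by rewrite eP // !horner_conjc rmorphM /= conjc_inv.
Qed.

Lemma conjc_fixed_Re (z : C) : conjc z = z -> (complex.Re z)%:C = z.
Proof.
case: z => a b [/eqP]; rewrite -subr_eq0 -opprD oppr_eq0 -mulr2n mulrn_eq0 /=.
by move=> /eqP->.
Qed.

Lemma horner_Re (P : {poly C}) (t : R) :
  (map_poly (@complex.Re R) P).[t] = complex.Re P.[t%:C].
Proof.
rewrite (horner_coef_wide t (size_poly _ _)) horner_coef.
elim/big_rec2: _ => [|i x y _ ->] //.
rewrite coef_map_id0 // -rmorphXn /=.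
by case: (P`_i) x => a b [c d]; rewrite /= mulr0 subr0.
Qed.

Lemma ratfn_real_polys (Q : {poly C}) n (f : R -> C) :
  (size Q <= n.+1)%N -> {in T, forall t, Q.[t%:C] != 0} -> ratfn Q n f ->
  {in T, forall t, conjc (f t) = f t} ->
  exists P' Q' : {poly R},
    [/\ (size P' <= (2 * n).+1)%N, (size Q' <= (2 * n).+1)%N &
        {in T, forall t, Q'.[t] != 0 /\ f t = (P'.[t] / Q'.[t])%:C}].
Proof.
(* Multiplying P and Q by conj Q makes their values on T real. *)
move=> sQ Qnz [P sP eP] fJ; pose Qc : {poly C} := map_poly conjc Q.
have size_ReMQc (S : {poly C}) : (size S <= n.+1)%N ->
    (size (map_poly (@complex.Re R) (S * Qc)) <= (2 * n).+1)%N.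
  move=> sS; apply: leq_trans (size_poly _ _) _.
  apply: leq_trans (size_polyMleq _ _) _; rewrite size_map_poly.
  by move: (size S) (size Q) sS sQ => a b; lia.
exists (map_poly (@complex.Re R) (P * Qc)), (map_poly (@complex.Re R) (Q * Qc)).
split=> [||t tT]; [exact: size_ReMQc | exact: size_ReMQc | rewrite !horner_Re].
have QQc_nz : (Q * Qc).[t%:C] != 0.
  by rewrite hornerM horner_conjc mulf_neq0 ?conjc_eq0 ?Qnz.
have QQcJ : conjc (Q * Qc).[t%:C] = (Q * Qc).[t%:C].
  by rewrite hornerM horner_conjc rmorphM /= conjcK mulrC.
have PQcE : (P * Qc).[t%:C] = f t * (Q * Qc).[t%:C].
  by rewrite !hornerM eP // mulrA divfK ?Qnz.
have PQcJ : conjc (P * Qc).[t%:C] = (P * Qc).[t%:C].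
  by rewrite PQcE rmorphM /= fJ // QQcJ.
rewrite fmorph_div /= !conjc_fixed_Re // PQcE mulfK //; split=> //.
by apply: contraNneq QQc_nz => ReQ0; rewrite -(conjc_fixed_Re QQcJ) ReQ0.
Qed.

End RationalFunctions.

Section MatrixRationalFunctions.
Variables (R : rcfType) (T : {pred R}).
Local Notation C := R[i].

Definition mx_ratfn N (Q : {poly C}) n (F : R -> 'M[C]_N) :=
  forall i j, ratfn T Q n (fun t => F t i j).

Definition mx_rational N n (F : R -> 'M[C]_N) :=
  exists Q : {poly C}, [/\ (size Q <= n.+1)%N, {in T, forall t, Q.[t%:C] != 0}
                         & mx_ratfn Q n F].

Lemma eq_mx_ratfn N Q n (F G : R -> 'M[C]_N) :
  {in T, F =1 G} -> mx_ratfn Q n F -> mx_ratfn Q n G.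
Proof. by move=> eFG ratF i j; apply: eq_ratfn (ratF i j) => t tT; rewrite eFG. Qed.

Lemma mx_ratfn_cst N (A : 'M[C]_N) : mx_ratfn 1 0 (fun=> A).
Proof. by move=> i j; apply: ratfn_cst. Qed.

Lemma mx_ratfnD N Q n (A B : R -> 'M[C]_N) :
  mx_ratfn Q n A -> mx_ratfn Q n B -> mx_ratfn Q n (fun t => A t + B t).
Proof.
by move=> ratA ratB i j; apply: eq_ratfn (ratfnD (ratA i j) (ratB i j)) => t _; rewrite mxE.
Qed.

Lemma mx_ratfnZ N Q n (c : C) (A : R -> 'M[C]_N) :
  mx_ratfn Q n A -> mx_ratfn Q n (fun t => c *: A t).
Proof. by move=> ratA i j; apply: eq_ratfn (ratfnZ c (ratA i j)) => t _; rewrite mxE. Qed.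

Lemma mx_ratfn_sum N Q n (I : Type) (r : seq I) (F : I -> R -> 'M[C]_N) :
  (forall x, mx_ratfn Q n (F x)) -> mx_ratfn Q n (fun t => \sum_(x <- r) F x t).
Proof.
move=> ratF i j; apply: eq_ratfn (ratfn_sum r (fun x => ratF x i j)) => t _.
by rewrite summxE.
Qed.

Lemma mx_ratfnM N Q1 Q2 n1 n2 (A B : R -> 'M[C]_N) :
  mx_ratfn Q1 n1 A -> mx_ratfn Q2 n2 B ->
  mx_ratfn (Q1 * Q2) (n1 + n2) (fun t => A t *m B t).
Proof.
move=> ratA ratB i j.
apply: eq_ratfn (ratfn_sum (index_enum _) (fun l => ratfnM (ratA i l) (ratB l j))) => t _.
by rewrite mxE.
Qed.

Lemma mx_ratfn_mull N Q n (K : 'M[C]_N) (B : R -> 'M[C]_N) :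
  mx_ratfn Q n B -> mx_ratfn Q n (fun t => K *m B t).
Proof.
move=> ratB i j.
apply: eq_ratfn (ratfn_sum (index_enum _) (fun l => ratfnZ (K i l) (ratB l j))) => t _.
by rewrite mxE.
Qed.

Lemma mx_ratfn_mulr N Q n (K : 'M[C]_N) (B : R -> 'M[C]_N) :
  mx_ratfn Q n B -> mx_ratfn Q n (fun t => B t *m K).
Proof.
move=> ratB i j.
apply: eq_ratfn (ratfn_sum (index_enum _) (fun l => ratfnZ (K l j) (ratB i l))) => t _.
by rewrite mxE; apply: eq_bigr => l _; rewrite mulrC.
Qed.

Lemma mx_ratfn_adj N Q n (A : R -> 'M[C]_N) :
  mx_ratfn Q n A -> mx_ratfn (map_poly conjc Q) n (fun t => adjmx (A t)).
Proof. by move=> ratA i j; apply: eq_ratfn (ratfnJ (ratA j i)) => t _; rewrite !mxE. Qed.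

Lemma mx_ratfn_embed k n (q : 'I_k -> 'I_n) Q e (U : R -> 'M[C]_(2 ^ k)) :
  mx_ratfn Q e U -> mx_ratfn Q e (fun t => embed q (U t)).
Proof.
move=> ratU i j.
have [acts|idle] := boolP [forall l, [exists s, q s == l] || (bitof i l == bitof j l)];
  last by apply: eq_ratfn (ratfn0 T Q e) => t _; rewrite mxE (negbTE idle).
apply: (@eq_ratfn _ _ _ _ (fun t => mxe (U t) (restr_idx q i) (restr_idx q j))).
  by move=> t _; rewrite mxE acts.
rewrite /mxe; case: insub => [a|]; last exact: ratfn0.
by case: insub => [b|]; [exact: ratU | exact: ratfn0].
Qed.

Lemma mx_ratfn_pencil N (A B : 'M[C]_N) :
  mx_ratfn 1 1 (fun t => (2 - t)%:C *: A + t%:C *: B).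
Proof.
move=> i j; apply: eq_ratfn (ratfn_affine T (2 * A i j) (B i j - A i j)) => t _.
by rewrite !mxE rmorphB /= rmorph_nat; ring.
Qed.

Lemma ratfn_det N n (B : R -> 'M[C]_N) :
  mx_ratfn 1 n B -> ratfn T 1 (N * n) (fun t => \det (B t)).
Proof.
move=> ratB; apply: eq_ratfn (ratfn_sum (index_enum _) (fun s : 'S_N =>
  ratfnZ ((-1) ^+ s) (ratfn_prod (fun i => ratB i (s i))))) => t _ //.
Qed.

Lemma mx_rational_widen N n n' (F : R -> 'M[C]_N) :
  (n <= n')%N -> mx_rational n F -> mx_rational n' F.
Proof.
move=> le_nn' [Q [sQ Qnz ratF]]; exists Q; split=> [||i j].
- exact: leq_trans sQ _.
- exact: Qnz.
- exact: ratfn_widen le_nn' (ratF i j).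
Qed.

Lemma mx_rational_cst N (A : 'M[C]_N) : mx_rational 0 (fun=> A).
Proof.
by exists 1; split=> [|t _|]; rewrite ?size_poly1 ?hornerC ?oner_neq0 //; apply: mx_ratfn_cst.
Qed.

Lemma mx_rational_invmx N (B : R -> 'M[C]_N) :
  mx_ratfn 1 1 B -> {in T, forall t, B t \in unitmx} ->
  mx_rational N (fun t => invmx (B t)).
Proof.
move=> ratB Bunit; have [Q sQ eQ] := ratfn_det ratB; rewrite muln1 in sQ.
have detE t : t \in T -> \det (B t) = Q.[t%:C] by move=> tT; rewrite eQ // hornerC divr1.
exists Q; split=> // [t tT|i j]; first by rewrite -detE // -unitfE -unitmxE Bunit.
have ratAdj : ratfn T 1 N.-1 (fun t => \adj (B t) i j).
  have ratMinor : mx_ratfn 1 1 (fun t => row' j (col' i (B t))).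
    by move=> a b; apply: eq_ratfn (ratB (lift j a) (lift i b)) => t _; rewrite !mxE.
  have := ratfnZ ((-1) ^+ (j + i)) (ratfn_det ratMinor).
  by rewrite muln1; apply: eq_ratfn => t _; rewrite mxE.
have [P sP eP] := ratAdj; exists P => [|t tT]; first by rewrite (leq_trans sP) // ltnS leq_pred.
by rewrite /invmx Bunit // mxE eP // detE // hornerC divr1 mulrC.
Qed.

End MatrixRationalFunctions.

Section Adjoint.
Variable R : rcfType.
Local Notation C := R[i].

Lemma adjmxM N (A B : 'M[C]_N) : adjmx (A *m B) = adjmx B *m adjmx A.
Proof. by rewrite /adjmx map_mxM trmx_mul. Qed.

Lemma adjmxK N : involutive (@adjmx R N).
Proof. by move=> A; apply/matrixP => i j; rewrite !mxE conjcK. Qed.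

Lemma adjmxD N (A B : 'M[C]_N) : adjmx (A + B) = adjmx A + adjmx B.
Proof. by apply/matrixP => i j; rewrite !mxE rmorphD. Qed.

Lemma adjmxZ N (c : C) (A : 'M[C]_N) : adjmx (c *: A) = conjc c *: adjmx A.
Proof. by apply/matrixP => i j; rewrite !mxE rmorphM. Qed.

Lemma adjmx_sum N (I : Type) (r : seq I) (F : I -> 'M[C]_N) :
  adjmx (\sum_(x <- r) F x) = \sum_(x <- r) adjmx (F x).
Proof.
apply/matrixP => i j; rewrite !mxE !summxE rmorph_sum.
by apply: eq_bigr => x _; rewrite !mxE.
Qed.

Definition hermitian N (A : 'M[C]_N) := adjmx A = A.

Lemma hermitian_diag N (A : 'M[C]_N) i : hermitian A -> conjc (A i i) = A i i.
Proof. by move=> /matrixP/(_ i i); rewrite !mxE. Qed.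

Lemma hermitian_conjmx N (U A : 'M[C]_N) : hermitian A -> hermitian (U *m A *m adjmx U).
Proof. by rewrite /hermitian => hA; rewrite !adjmxM adjmxK hA mulmxA. Qed.

End Adjoint.

Section NoisyCircuits.
Variable R : rcfType.
Local Notation C := R[i].

Lemma hermitian_noise n gamma (ch : noise_chan R n) rho :
  hermitian rho -> hermitian (apply_noise gamma ch rho).
Proof.
move=> hrho; rewrite /hermitian /apply_noise adjmxD !adjmxZ !conjc_real adjmx_sum hrho.
by congr (_ + _ *: _); apply: eq_bigr => K _; apply: hermitian_conjmx.
Qed.

Lemma hermitian_noises n gamma (s : seq (noise_chan R n)) rho :
  hermitian rho -> hermitian (apply_noises gamma s rho).
Proof. by elim: s rho => [|ch s IHs] rho hrho //=; apply/IHs/hermitian_noise. Qed.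

Lemma hermitian_proj0 n : hermitian (proj0 R n).
Proof. by apply/matrixP => i j; rewrite !mxE andbC rmorph_nat. Qed.

Lemma hermitian_noisy_circuit n m (k : 'I_m -> nat) (q : forall i, 'I_(k i) -> 'I_n)
    (G H : forall i, 'M[C]_(2 ^ k i)) gamma Nz theta :
  hermitian (noisy_circuit q G H gamma Nz theta (proj0 R n)).
Proof.
have : hermitian (apply_noises gamma (Nz ord0) (proj0 R n)).
  exact/hermitian_noises/hermitian_proj0.
rewrite /noisy_circuit; elim: (enum 'I_m) (apply_noises _ _ _) => //= i s IHs rho hrho.
by apply/IHs/hermitian_noises/hermitian_conjmx.
Qed.

Lemma mxtrace_proj0_mul n (X : 'M[C]_(2 ^ n)) (z : 'I_(2 ^ n)) :
  z = 0%N :> nat -> \tr (proj0 R n *m X) = X z z.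
Proof.
move=> z0; have neq_z l : l != z -> ((l : nat) == 0%N) = false.
  by apply: contraNF => /eqP l0; apply/eqP/val_inj; rewrite /= l0 z0.
rewrite /mxtrace (bigD1 z) //= big1 => [|i /neq_z iz]; last first.
  by rewrite mxE big1 // => l _; rewrite mxE iz /= mulr0n mul0r.
rewrite mxE (bigD1 z) //= big1 => [|l /neq_z lz]; last first.
  by rewrite mxE lz andbF /= mulr0n mul0r.
by rewrite mxE z0 mul1r !addr0.
Qed.

End NoisyCircuits.

Section RationalCircuits.
Variables (R : rcfType) (T : {pred R}).
Local Notation C := R[i].

Lemma mx_ratfn_noise n Q e gamma (ch : noise_chan R n) (rho : R -> 'M[C]_(2 ^ n)) :
  mx_ratfn T Q e rho -> mx_ratfn T Q e (fun t => apply_noise gamma ch (rho t)).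
Proof.
move=> ratRho; apply/mx_ratfnD/mx_ratfnZ/mx_ratfn_sum => [|K]; first exact: mx_ratfnZ.
exact/mx_ratfn_mulr/mx_ratfn_mull.
Qed.

Lemma mx_rational_noises n e gamma (s : seq (noise_chan R n)) (rho : R -> 'M[C]_(2 ^ n)) :
  mx_rational T e rho -> mx_rational T e (fun t => apply_noises gamma s (rho t)).
Proof.
move=> [Q [sQ Qnz ratRho]]; exists Q; split=> //.
by elim: s rho ratRho => [|ch s IHs] rho ratRho //=; apply/IHs/mx_ratfn_noise.
Qed.

Lemma mx_rational_unitary N d e (U rho : R -> 'M[C]_N) :
  mx_rational T d U -> mx_rational T e rho ->
  mx_rational T (e + 2 * d) (fun t => apply_unitary (U t) (rho t)).
Proof.
move=> [QU [sQU QUnz ratU]] [Qr [sQr Qrnz ratRho]].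
apply: (@mx_rational_widen _ _ _ (d + e + d)); first lia.
exists (QU * Qr * map_poly conjc QU); split=> [|t tT|].
- apply: leq_trans (size_polyMleq _ _) _; rewrite size_map_poly.
  move: (size_polyMleq QU Qr) sQU sQr.
  by move: (size (QU * Qr)) (size QU) (size Qr) => a b c; lia.
- by rewrite !hornerM horner_conjc !mulf_neq0 ?conjc_eq0 ?QUnz ?Qrnz.
- exact: mx_ratfnM (mx_ratfnM ratU ratRho) (mx_ratfn_adj ratU).
Qed.

Lemma mx_rational_embed k n (q : 'I_k -> 'I_n) e (U : R -> 'M[C]_(2 ^ k)) :
  mx_rational T e U -> mx_rational T e (fun t => embed q (U t)).
Proof. by move=> [Q [sQ Qnz ratU]]; exists Q; split=> //; apply: mx_ratfn_embed. Qed.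

Lemma mx_rational_cayley d (H G : 'M[C]_d) :
  {in T, forall t, (2 - t)%:C *: 1%:M + t%:C *: H \in unitmx} ->
  mx_rational T d.+1 (fun t => cayley H t *m G).
Proof.
move=> Hunit; have [Q [sQ Qnz ratInv]] := mx_rational_invmx (mx_ratfn_pencil T 1%:M H) Hunit.
exists Q; split=> //; first exact: leqW.
have := mx_ratfn_mulr G (mx_ratfnM (mx_ratfn_pencil T H 1%:M) ratInv).
by rewrite mul1r; apply: eq_mx_ratfn => t _; rewrite /cayley addrC.
Qed.

Lemma mx_rational_noisy_circuit Kmax n m (k : 'I_m -> nat) (q : forall i, 'I_(k i) -> 'I_n)
    (G H : forall i, 'M[C]_(2 ^ k i)) gamma (Nz : 'I_m.+1 -> seq (noise_chan R n)) :
  (forall i, k i <= Kmax)%N ->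
  (forall i, {in T, forall t, (2 - t)%:C *: 1%:M + t%:C *: H i \in unitmx}) ->
  mx_rational T (m * (2 * (2 ^ Kmax).+1))
    (fun t => noisy_circuit q G H gamma Nz t (proj0 R n)).
Proof.
move=> k_le Hunit; set d := (2 ^ Kmax).+1.
have ratGate i : mx_rational T d (fun t => embed (q i) (cayley (H i) t *m G i)).
  apply: mx_rational_widen (mx_rational_embed _ (mx_rational_cayley (G i) (Hunit i))).
  by rewrite ltnS leq_exp2l.
have ratSteps s e (rho : R -> 'M[C]_(2 ^ n)) : mx_rational T e rho ->
    mx_rational T (e + size s * (2 * d)) (fun t =>
      foldl (fun r i => apply_noises gamma (Nz (lift ord0 i))
                          (apply_unitary (embed (q i) (cayley (H i) t *m G i)) r))
            (rho t) s).
  elim: s e rho => [|i s IHs] e rho ratRho /=; first by rewrite addn0.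
  rewrite mulSn addnA; apply: IHs.
  exact/mx_rational_noises/mx_rational_unitary.
have ratInit := mx_rational_noises gamma (Nz ord0) (mx_rational_cst T (proj0 R n)).
by have := ratSteps (enum 'I_m) 0%N _ ratInit; rewrite size_enum_ord add0n.
Qed.

End RationalCircuits.

Theorem lemma3 (R : rcfType) (Kmax cN : nat) :
  exists c : nat,
  forall (n m : nat) (k : 'I_m -> nat) (q : forall i, 'I_(k i) -> 'I_n)
         (G H : forall i, 'M[R[i]]_(2 ^ k i)) (gamma : R)
         (Nz : 'I_m.+1 -> seq (noise_chan R n)),
    (forall i, k i <= Kmax)%N ->
    (forall i, injective (q i)) ->
    (forall i, unitary (G i)) ->
    (forall i, unitary (H i)) ->
    (forall i (theta : R), 0 <= theta <= 1 ->
       (2 - theta)%:C *: 1%:M + theta%:C *: H i \in unitmx) ->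
    0 <= gamma <= 1 ->
    (forall j ch, List.In ch (Nz j) -> valid_noise Kmax ch) ->
    (\sum_(j < m.+1) size (Nz j) <= cN * m)%N ->
    exists P Q : {poly R},
      (size P <= (c * m).+1)%N /\ (size Q <= (c * m).+1)%N /\
      forall theta : R, 0 <= theta <= 1 ->
        Q.[theta] != 0 /\
        p0 q G H gamma Nz theta = (P.[theta] / Q.[theta])%:C.
Proof.
exists (4 * (2 ^ Kmax).+1) => n m k q G H gamma Nz k_le _ _ _ Hunit _ _ _.
pose T := [pred t : R | 0 <= t <= 1].
have [Q [sQ Qnz ratX]] := mx_rational_noisy_circuit (T := T) q G gamma Nz k_le Hunit.
have z0 : (0 < 2 ^ n)%N by rewrite expn_gt0.
pose z := Ordinal z0.
have X_real t : t \in T -> conjc (noisy_circuit q G H gamma Nz t (proj0 R n) z z) =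
                          noisy_circuit q G H gamma Nz t (proj0 R n) z z.
  by move=> _; apply/hermitian_diag/hermitian_noisy_circuit.
have [P' [Q' [sP' sQ' eP']]] := ratfn_real_polys sQ Qnz (ratX z z) X_real.
have deg_c : (2 * (m * (2 * (2 ^ Kmax).+1)) = 4 * (2 ^ Kmax).+1 * m)%N by ring.
exists P', Q'; rewrite -deg_c; do 2!split=> //.
by move=> t t01; rewrite /p0 (mxtrace_proj0_mul _ (z := z)) //; apply: eP'.
Qed.
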